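(* Let $1\le i<k<j<n$. Then in ${\boldsymbol U}_{v}(\mathfrak q_n)$ the following hold: \[ \mathsf E_{i,j}=-\mathsf E_{i,k}\mathsf E_{k,j}+v^{-1}\mathsf E_{k,j}\mathsf E_{i,k},\qquad \overline{\mathsf E}_{i,j}=-\mathsf E_{i,k}\overline{\mathsf E}_{k,j}+v^{-1}\overline{\mathsf E}_{k,j}\mathsf E_{i,k}, \] \[ \mathsf E_{j,i}=-\mathsf E_{j,k}\mathsf E_{k,i}+v\,\mathsf E_{k,i}\mathsf E_{j,k},\qquad \overline{\mathsf E}_{j,i}=-\overline{\mathsf E}_{j,k}\mathsf E_{k,i}+v\,\mathsf E_{k,i}\overline{\mathsf E}_{j,k}. \]
   Context: Let $v$ be an indeterminate. The quantum queer superalgebra ${\boldsymbol U}_{v}(\mathfrak q_n)$ is the associative superalgebra over $\mathbb Q(v)$ generated by even generators $\mathsf K_i,\mathsf K_i^{-1}$ ($1\le i\le n$), $\mathsf E_j,\mathsf F_j$ ($1\le j\le n-1$) and odd generators $\mathsf K_{\bar i}$ ($1\le i\le n$), $\mathsf E_{\bar j},\mathsf F_{\bar j}$ ($1\le j\le n-1$), subject to the following relations (indices are taken only where they make sense), where $(\epsilon_i,\alpha_j)=\delta_{i,j}-\delta_{i,j+1}$: (QQ1) $\mathsf K_i\mathsf K_i^{-1}=\mathsf K_i^{-1}\mathsf K_i=1$, $\mathsf K_i\mathsf K_j=\mathsf K_j\mathsf K_i$, $\mathsf K_i\mathsf K_{\bar j}=\mathsf K_{\bar j}\mathsf K_i$,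 $\mathsf K_{\bar i}\mathsf K_{\bar j}+\mathsf K_{\bar j}\mathsf K_{\bar i}=2\delta_{i,j}\frac{\mathsf K_i^2-\mathsf K_i^{-2}}{v^2-v^{-2}}$. (QQ2) $\mathsf K_i\mathsf E_j=v^{(\epsilon_i,\alpha_j)}\mathsf E_j\mathsf K_i$, $\mathsf K_i\mathsf E_{\bar j}=v^{(\epsilon_i,\alpha_j)}\mathsf E_{\bar j}\mathsf K_i$, $\mathsf K_i\mathsf F_j=v^{-(\epsilon_i,\alpha_j)}\mathsf F_j\mathsf K_i$, $\mathsf K_i\mathsf F_{\bar j}=v^{-(\epsilon_i,\alpha_j)}\mathsf F_{\bar j}\mathsf K_i$. (QQ3) $\mathsf K_{\bar i}\mathsf E_i-v\mathsf E_i\mathsf K_{\bar i}=\mathsf E_{\bar i}\mathsf K_i^{-1}$, $v\mathsf K_{\bar i}\mathsf E_{i-1}-\mathsf E_{i-1}\mathsf K_{\bar i}=-\mathsf K_i^{-1}\mathsf E_{\overline{i-1}}$, $\mathsf K_{\bar i}\mathsf F_i-v\mathsf F_i\mathsf K_{\bar i}=-\mathsf F_{\bar i}\mathsf K_i$, $v\mathsf K_{\bar i}\mathsf F_{i-1}-\mathsf F_{i-1}\mathsf K_{\bar i}=\mathsf K_i\mathsf F_{\overline{i-1}}$, $\mathsf K_{\bar i}\mathsf E_{\bar i}+v\mathsf E_{\bar i}\mathsf K_{\bar i}=\mathsf E_i\mathsf K_i^{-1}$, $v\mathsf K_{\bar i}\mathsf E_{\overline{i-1}}+\mathsf E_{\overline{i-1}}\mathsf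 K_{\bar i}=\mathsf K_i^{-1}\mathsf E_{i-1}$, $\mathsf K_{\bar i}\mathsf F_{\bar i}+v\mathsf F_{\bar i}\mathsf K_{\bar i}=\mathsf F_i\mathsf K_i$, $v\mathsf K_{\bar i}\mathsf F_{\overline{i-1}}+\mathsf F_{\overline{i-1}}\mathsf K_{\bar i}=\mathsf K_i\mathsf F_{i-1}$, and for $j\ne i,i-1$: $\mathsf K_{\bar i}\mathsf E_j=\mathsf E_j\mathsf K_{\bar i}$, $\mathsf K_{\bar i}\mathsf F_j=\mathsf F_j\mathsf K_{\bar i}$, $\mathsf K_{\bar i}\mathsf E_{\bar j}=-\mathsf E_{\bar j}\mathsf K_{\bar i}$, $\mathsf K_{\bar i}\mathsf F_{\bar j}=-\mathsf F_{\bar j}\mathsf K_{\bar i}$. (QQ4) $\mathsf E_i\mathsf F_j-\mathsf F_j\mathsf E_i=\delta_{i,j}\frac{\mathsf K_i\mathsf K_{i+1}^{-1}-\mathsf K_i^{-1}\mathsf K_{i+1}}{v-v^{-1}}$, $\mathsf E_{\bar i}\mathsf F_{\bar j}+\mathsf F_{\bar j}\mathsf E_{\bar i}=\delta_{i,j}\big(\frac{\mathsf K_i\mathsf K_{i+1}-\mathsf K_i^{-1}\mathsf K_{i+1}^{-1}}{v-v^{-1}}+(v-v^{-1})\mathsf K_{\bar i}\mathsf K_{\overline{i+1}}\big)$, $\mathsf E_i\mathsf F_{\bar j}-\mathsf F_{\bar j}\mathsf E_i=\delta_{i,j}(\mathsf K_{i+1}^{-1}\mathsf K_{\bar i}-\mathsf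 K_{\overline{i+1}}\mathsf K_i^{-1})$, $\mathsf E_{\bar i}\mathsf F_j-\mathsf F_j\mathsf E_{\bar i}=\delta_{i,j}(\mathsf K_{i+1}\mathsf K_{\bar i}-\mathsf K_{\overline{i+1}}\mathsf K_i)$. (QQ5) $\mathsf E_{\bar i}^2=-\frac{v-v^{-1}}{v+v^{-1}}\mathsf E_i^2$, $\mathsf F_{\bar i}^2=\frac{v-v^{-1}}{v+v^{-1}}\mathsf F_i^2$; for $|i-j|\ne1$: $\mathsf E_i\mathsf E_{\bar j}=\mathsf E_{\bar j}\mathsf E_i$, $\mathsf F_i\mathsf F_{\bar j}=\mathsf F_{\bar j}\mathsf F_i$; for $|i-j|>1$: $\mathsf E_i\mathsf E_j=\mathsf E_j\mathsf E_i$, $\mathsf F_i\mathsf F_j=\mathsf F_j\mathsf F_i$, $\mathsf E_{\bar i}\mathsf E_{\bar j}=-\mathsf E_{\bar j}\mathsf E_{\bar i}$, $\mathsf F_{\bar i}\mathsf F_{\bar j}=-\mathsf F_{\bar j}\mathsf F_{\bar i}$; $\mathsf E_i\mathsf E_{i+1}-v\mathsf E_{i+1}\mathsf E_i=\mathsf E_{\bar i}\mathsf E_{\overline{i+1}}+v\mathsf E_{\overline{i+1}}\mathsf E_{\bar i}$, $\mathsf E_i\mathsf E_{\overline{i+1}}-v\mathsf E_{\overline{i+1}}\mathsf E_i=\mathsf E_{\bar i}\mathsf E_{i+1}-v\mathsf E_{i+1}\mathsf E_{\bar i}$, $\mathsf F_i\mathsf F_{i+1}-v\mathsf F_{i+1}\mathsf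 F_i=-(\mathsf F_{\bar i}\mathsf F_{\overline{i+1}}+v\mathsf F_{\overline{i+1}}\mathsf F_{\bar i})$, $\mathsf F_i\mathsf F_{\overline{i+1}}-v\mathsf F_{\overline{i+1}}\mathsf F_i=\mathsf F_{\bar i}\mathsf F_{i+1}-v\mathsf F_{i+1}\mathsf F_{\bar i}$. (QQ6) for $|i-j|=1$: $\mathsf E_i^2X-(v+v^{-1})\mathsf E_iX\mathsf E_i+X\mathsf E_i^2=0$ for $X\in\{\mathsf E_j,\mathsf E_{\bar j}\}$ and $\mathsf F_i^2Y-(v+v^{-1})\mathsf F_iY\mathsf F_i+Y\mathsf F_i^2=0$ for $Y\in\{\mathsf F_j,\mathsf F_{\bar j}\}$. Quantum root vectors: for $1\le i\le n-1$ put $\mathsf E_{i,i+1}=\mathsf E_i$, $\overline{\mathsf E}_{i,i+1}=\mathsf E_{\bar i}$, $\mathsf E_{i+1,i}=\mathsf F_i$, $\overline{\mathsf E}_{i+1,i}=\mathsf F_{\bar i}$, and recursively for $i+1<j\le n$: $\mathsf E_{i,j}=-\mathsf E_{i,j-1}\mathsf E_{j-1}+v^{-1}\mathsf E_{j-1}\mathsf E_{i,j-1}$, $\overline{\mathsf E}_{i,j}=-\mathsf E_{i,j-1}\mathsf E_{\overline{j-1}}+v^{-1}\mathsf E_{\overline{j-1}}\mathsf E_{i,j-1}$, $\mathsf E_{j,i}=-\mathsf F_{j-1}\mathsf E_{j-1,i}+v\mathsf E_{j-1,i}\mathsf F_{j-1}$, $\overline{\mathsf E}_{j,i}=-\mathsf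 F_{\overline{j-1}}\mathsf E_{j-1,i}+v\mathsf E_{j-1,i}\mathsf F_{\overline{j-1}}$. *)

From HB Require Import structures.
From mathcomp Require Import all_boot all_order all_algebra.
From mathcomp Require Import fraction.
Set Implicit Arguments. Unset Strict Implicit. Unset Printing Implicit Defensive.
Import Order.TTheory GRing.Theory Num.Theory.
Local Open Scope ring_scope.

Notation Qv := {fraction {poly rat}}.
Definition vq : Qv := @FracField.tofrac {poly rat} 'X.

(* (epsilon_i, alpha_j) = delta_{i,j} - delta_{i,j+1} *)
Definition eps_alpha (i j : nat) : int := (i == j)%:Z - (i == j.+1)%:Z.

(* Defining relations (QQ1)-(QQ6) of U_v(q_n), for generators indexed by nat
   (K i, Ki i = K_i^{-1}, Kb i = K_{bar i} for 1 <= i <= n;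
    E j, F j, Eb j = E_{bar j}, Fb j = F_{bar j} for 1 <= j <= n-1),
   inside an associative unital Q(v)-algebra A.  Values at indices outside
   these ranges are irrelevant and unconstrained. *)
Definition qq_rels (A : algType Qv) (n : nat)
  (K Ki Kb E F Eb Fb : nat -> A) : Prop :=
  let v := vq in
  let inK i := (1 <= i <= n)%N in
  let inE j := (1 <= j <= n.-1)%N in
  [/\ forall i, inK i -> K i * Ki i = 1 /\ Ki i * K i = 1,
      forall i j, inK i -> inK j -> K i * K j = K j * K i,
      forall i j, inK i -> inK j -> K i * Kb j = Kb j * K i,
      forall i j, inK i -> inK j ->
        Kb i * Kb j + Kb j * Kb i =
        (if i == j then (2 / (v ^+ 2 - v ^- 2)) *: (K i ^+ 2 - Ki i ^+ 2) else 0)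
    & forall i j, inK i -> inE j ->
        [/\ K i * E j = v ^ (eps_alpha i j) *: (E j * K i),
            K i * Eb j = v ^ (eps_alpha i j) *: (Eb j * K i),
            K i * F j = v ^ (- eps_alpha i j) *: (F j * K i)
          & K i * Fb j = v ^ (- eps_alpha i j) *: (Fb j * K i)]] /\
  [/\ forall i, inK i -> inE i ->
        [/\ Kb i * E i - v *: (E i * Kb i) = Eb i * Ki i,
            Kb i * F i - v *: (F i * Kb i) = - (Fb i * K i),
            Kb i * Eb i + v *: (Eb i * Kb i) = E i * Ki i
          & Kb i * Fb i + v *: (Fb i * Kb i) = F i * K i],
      forall i, inK i -> inE i.-1 ->
        [/\ v *: (Kb i * E i.-1) - E i.-1 * Kb i = - (Ki i * Eb i.-1),
            v *: (Kb i * F i.-1) - F i.-1 * Kb i = K i * Fb i.-1,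
            v *: (Kb i * Eb i.-1) + Eb i.-1 * Kb i = Ki i * E i.-1
          & v *: (Kb i * Fb i.-1) + Fb i.-1 * Kb i = K i * F i.-1]
    & forall i j, inK i -> inE j -> j != i -> j != i.-1 ->
        [/\ Kb i * E j = E j * Kb i,
            Kb i * F j = F j * Kb i,
            Kb i * Eb j = - (Eb j * Kb i)
          & Kb i * Fb j = - (Fb j * Kb i)]] /\
  (forall i j, inE i -> inE j ->
     [/\ E i * F j - F j * E i =
           (if i == j then (v - v^-1)^-1 *: (K i * Ki i.+1 - Ki i * K i.+1) else 0),
         Eb i * Fb j + Fb j * Eb i =
           (if i == j then (v - v^-1)^-1 *: (K i * K i.+1 - Ki i * Ki i.+1)
                           + (v - v^-1) *: (Kb i * Kb i.+1) else 0),
         E i * Fb j - Fb j * E i =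
           (if i == j then Ki i.+1 * Kb i - Kb i.+1 * Ki i else 0)
       & Eb i * F j - F j * Eb i =
           (if i == j then K i.+1 * Kb i - Kb i.+1 * K i else 0)]) /\
  [/\ forall i, inE i ->
        Eb i ^+ 2 = - ((v - v^-1) / (v + v^-1)) *: E i ^+ 2 /\
        Fb i ^+ 2 = ((v - v^-1) / (v + v^-1)) *: F i ^+ 2,
      forall i j, inE i -> inE j -> i != j.+1 -> j != i.+1 ->
        E i * Eb j = Eb j * E i /\ F i * Fb j = Fb j * F i,
      forall i j, inE i -> inE j -> (i.+1 < j)%N || (j.+1 < i)%N ->
        [/\ E i * E j = E j * E i, F i * F j = F j * F i,
            Eb i * Eb j = - (Eb j * Eb i) & Fb i * Fb j = - (Fb j * Fb i)]
    & forall i, inE i -> inE i.+1 ->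
        [/\ E i * E i.+1 - v *: (E i.+1 * E i) = Eb i * Eb i.+1 + v *: (Eb i.+1 * Eb i),
            E i * Eb i.+1 - v *: (Eb i.+1 * E i) = Eb i * E i.+1 - v *: (E i.+1 * Eb i),
            F i * F i.+1 - v *: (F i.+1 * F i) = - (Fb i * Fb i.+1 + v *: (Fb i.+1 * Fb i))
          & F i * Fb i.+1 - v *: (Fb i.+1 * F i) = Fb i * F i.+1 - v *: (F i.+1 * Fb i)]] /\
  (forall i j, inE i -> inE j -> (i == j.+1) || (j == i.+1) ->
     [/\ E i ^+ 2 * E j - (v + v^-1) *: (E i * E j * E i) + E j * E i ^+ 2 = 0,
         E i ^+ 2 * Eb j - (v + v^-1) *: (E i * Eb j * E i) + Eb j * E i ^+ 2 = 0,
         F i ^+ 2 * F j - (v + v^-1) *: (F i * F j * F i) + F j * F i ^+ 2 = 0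
       & F i ^+ 2 * Fb j - (v + v^-1) *: (F i * Fb j * F i) + Fb j * F i ^+ 2 = 0]).

(* Quantum root vectors.  Eup E i j = E_{i,j} (i < j):
   E_{i,i+1} = E_i, E_{i,j} = -E_{i,j-1} E_{j-1} + v^{-1} E_{j-1} E_{i,j-1}. *)
Fixpoint Eup (A : algType Qv) (E : nat -> A) (i j : nat) : A :=
  match j with
  | 0 => 0
  | j'.+1 =>
      if j' == i then E i
      else if (i < j')%N then - (Eup E i j' * E j') + vq^-1 *: (E j' * Eup E i j')
      else 0
  end.

(* Ebup E Eb i j = \bar E_{i,j} (i < j). *)
Definition Ebup (A : algType Qv) (E Eb : nat -> A) (i j : nat) : A :=
  if j == i.+1 then Eb i
  else - (Eup E i j.-1 * Eb j.-1) + vq^-1 *: (Eb j.-1 * Eup E i j.-1).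

(* Edown F i j = E_{j,i} (i < j):
   E_{i+1,i} = F_i, E_{j,i} = -F_{j-1} E_{j-1,i} + v E_{j-1,i} F_{j-1}. *)
Fixpoint Edown (A : algType Qv) (F : nat -> A) (i j : nat) : A :=
  match j with
  | 0 => 0
  | j'.+1 =>
      if j' == i then F i
      else if (i < j')%N then - (F j' * Edown F i j') + vq *: (Edown F i j' * F j')
      else 0
  end.

(* Ebdown F Fb i j = \bar E_{j,i} (i < j). *)
Definition Ebdown (A : algType Qv) (F Fb : nat -> A) (i j : nat) : A :=
  if j == i.+1 then Fb i
  else - (Fb j.-1 * Edown F i j.-1) + vq *: (Edown F i j.-1 * Fb j.-1).

From mathcomp Require Import all_boot all_order all_algebra.
From mathcomp Require Import zify.
Set Implicit Arguments. Unset Strict Implicit. Unset Printing Implicit Defensive.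
Import GRing.Theory.
Local Open Scope ring_scope.

(* Every root vector is an iterated twisted commutator [X, Y]_c = - X Y + c Y X
   of simple generators.  This bracket satisfies the associativity law
   [X, [Y, Z]_c]_c = [[X, Y]_c, Z]_c as soon as X and Z commute, and the factor
   E_{i,k} is built from E_i, ..., E_{k-1}, all of which commute with the
   generators E_{k+1}, ..., E_{j-1} by (QQ5).  Induction on j then moves the
   brackets from E_{i,j} = [...[E_{i,k}, E_k], ..., E_{j-1}] to
   [E_{i,k}, [...[E_k, E_{k+1}], ..., E_{j-1}]] = [E_{i,k}, E_{k,j}]. *)

Section TwistedBracket.

Variables (R : pzRingType) (A : algType R) (c : R).

Definition qbr (X Y : A) : A := - (X * Y) + c *: (Y * X).

Lemma qbrA (X Y Z : A) : GRing.comm X Z -> qbr X (qbr Y Z) = qbr (qbr X Y) Z.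
Proof.
move=> cXZ; have cXZY : X * Z * Y = Z * X * Y by rewrite cXZ.
have cYZX : Y * Z * X = Y * X * Z by rewrite -!mulrA cXZ.
rewrite /qbr !(mulrDl, mulrDr, mulrN, mulNr, opprD, opprK, scalerDr, scalerN).
by rewrite -!(scalerAl, scalerAr) !mulrA cXZY cYZX addrACA.
Qed.

Lemma commr_qbr (G X Y : A) :
  GRing.comm G X -> GRing.comm G Y -> GRing.comm G (qbr X Y).
Proof.
move=> cGX cGY; apply: commrD; first exact/commrN/commrM.
by rewrite /GRing.comm -scalerAl -scalerAr (commrM cGY cGX).
Qed.

End TwistedBracket.

Section RootVectors.

Variables (A : algType Qv) (E F Eb Fb : nat -> A).

Lemma Eup_next a : Eup E a a.+1 = E a.
Proof. by rewrite /= eqxx. Qed.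

Lemma Eup_succ a b : (a < b)%N -> Eup E a b.+1 = qbr vq^-1 (Eup E a b) (E b).
Proof. by move=> ltab /=; rewrite gtn_eqF ltab. Qed.

Lemma Ebup_next a : Ebup E Eb a a.+1 = Eb a.
Proof. by rewrite /Ebup eqxx. Qed.

Lemma Ebup_succ a b :
  (a < b)%N -> Ebup E Eb a b.+1 = qbr vq^-1 (Eup E a b) (Eb b).
Proof. by move=> ltab; rewrite /Ebup eqSS gtn_eqF. Qed.

Lemma Edown_next a : Edown F a a.+1 = F a.
Proof. by rewrite /= eqxx. Qed.

Lemma Edown_succ a b : (a < b)%N -> Edown F a b.+1 = qbr vq (F b) (Edown F a b).
Proof. by move=> ltab /=; rewrite gtn_eqF ltab. Qed.

Lemma Ebdown_next a : Ebdown F Fb a a.+1 = Fb a.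
Proof. by rewrite /Ebdown eqxx. Qed.

Lemma Ebdown_succ a b :
  (a < b)%N -> Ebdown F Fb a b.+1 = qbr vq (Fb b) (Edown F a b).
Proof. by move=> ltab; rewrite /Ebdown eqSS gtn_eqF. Qed.

Lemma commr_Eup G a b :
  (forall m, (a <= m < b)%N -> GRing.comm G (E m)) -> GRing.comm G (Eup E a b).
Proof.
elim: b => [|b IH] cGE /=; first exact: commr0.
case: eqP => [eq_ba|_]; first by apply: cGE; lia.
case: ifP => ltab; last exact: commr0.
apply: commr_qbr; last by apply: cGE; lia.
by apply: IH => m mab; apply: cGE; lia.
Qed.

Lemma commr_Edown G a b :
  (forall m, (a <= m < b)%N -> GRing.comm G (F m)) -> GRing.comm G (Edown F a b).
Proof.
elim: b => [|b IH] cGF /=; first exact: commr0.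
case: eqP => [eq_ba|_]; first by apply: cGF; lia.
case: ifP => ltab; last exact: commr0.
apply: commr_qbr; first by apply: cGF; lia.
by apply: IH => m mab; apply: cGF; lia.
Qed.

Lemma Eup_split a k b : (a < k < b)%N ->
  (forall m l, (a <= m)%N -> (m.+1 < l < b)%N -> GRing.comm (E m) (E l)) ->
  Eup E a b = qbr vq^-1 (Eup E a k) (Eup E k b).
Proof.
case/andP=> ltak; elim: b => // b IH ltkb cE.
have [<-|ltkb'] := eqVneq k b; first by rewrite Eup_succ // Eup_next.
have {}ltkb : (k < b)%N by lia.
rewrite !Eup_succ ?(ltn_trans ltak) // IH //
  => [|m l am mlb]; last by apply: cE; lia.
symmetry; apply/qbrA/commr_sym/commr_Eup => m amk; apply/commr_sym/cE; lia.
Qed.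

Lemma Ebup_split a k b : (a < k < b)%N ->
  (forall m l, (a <= m)%N -> (m.+1 < l < b)%N -> GRing.comm (E m) (E l)) ->
  (forall m l, (a <= m)%N -> (m.+1 < l < b)%N -> GRing.comm (E m) (Eb l)) ->
  Ebup E Eb a b = qbr vq^-1 (Eup E a k) (Ebup E Eb k b).
Proof.
case: b => [|b] /andP[ltak ltkb] cE cEb; first by [].
have [<-|ltkb'] := eqVneq k b; first by rewrite Ebup_succ // Ebup_next.
have {}ltkb : (k < b)%N by lia.
rewrite !Ebup_succ ?(ltn_trans ltak) // (@Eup_split a k) ?ltak //
  => [|m l am mlb]; last by apply: cE; lia.
symmetry; apply/qbrA/commr_sym/commr_Eup => m amk; apply/commr_sym/cEb; lia.
Qed.

Lemma Edown_split a k b : (a < k < b)%N ->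
  (forall m l, (a <= m)%N -> (m.+1 < l < b)%N -> GRing.comm (F m) (F l)) ->
  Edown F a b = qbr vq (Edown F k b) (Edown F a k).
Proof.
case/andP=> ltak; elim: b => // b IH ltkb cF.
have [<-|ltkb'] := eqVneq k b; first by rewrite Edown_succ // Edown_next.
have {}ltkb : (k < b)%N by lia.
rewrite !Edown_succ ?(ltn_trans ltak) // IH //
  => [|m l am mlb]; last by apply: cF; lia.
apply/qbrA/commr_Edown => m amk; apply/commr_sym/cF; lia.
Qed.

Lemma Ebdown_split a k b : (a < k < b)%N ->
  (forall m l, (a <= m)%N -> (m.+1 < l < b)%N -> GRing.comm (F m) (F l)) ->
  (forall m l, (a <= m)%N -> (m.+1 < l < b)%N -> GRing.comm (F m) (Fb l)) ->
  Ebdown F Fb a b = qbr vq (Ebdown F Fb k b) (Edown F a k).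
Proof.
case: b => [|b] /andP[ltak ltkb] cF cFb; first by [].
have [<-|ltkb'] := eqVneq k b; first by rewrite Ebdown_succ // Ebdown_next.
have {}ltkb : (k < b)%N by lia.
rewrite !Ebdown_succ ?(ltn_trans ltak) // (@Edown_split a k) ?ltak //
  => [|m l am mlb]; last by apply: cF; lia.
apply/qbrA/commr_Edown => m amk; apply/commr_sym/cFb; lia.
Qed.

End RootVectors.

Lemma qq_rels_comm_far (A : algType Qv) n (K Ki Kb E F Eb Fb : nat -> A) m l :
  qq_rels n K Ki Kb E F Eb Fb -> (1 <= m)%N -> (m.+1 < l < n)%N ->
  [/\ GRing.comm (E m) (E l), GRing.comm (F m) (F l),
      GRing.comm (E m) (Eb l) & GRing.comm (F m) (Fb l)].
Proof.
case=> _ [_ [_ [[_ qq5_bar qq5_far _] _]]] m_gt0 /andP[ltml ltln].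
have inE_m : (1 <= m <= n.-1)%N by lia.
have inE_l : (1 <= l <= n.-1)%N by lia.
have far_ml : (m.+1 < l)%N || (l.+1 < m)%N by rewrite ltml.
have ne_ml : m != l.+1 by lia.
have ne_lm : l != m.+1 by lia.
have [cEE cFF _ _] := qq5_far m l inE_m inE_l far_ml.
by have [cEEb cFFb] := qq5_bar m l inE_m inE_l ne_ml ne_lm.
Qed.

Theorem corollary2p5 (A : algType Qv) (n : nat) (K Ki Kb E F Eb Fb : nat -> A)
  (hrel : qq_rels n K Ki Kb E F Eb Fb) (i k j : nat)
  (hi : (1 <= i)%N) (hik : (i < k)%N) (hkj : (k < j)%N) (hjn : (j < n)%N) :
  [/\ Eup E i j = - (Eup E i k * Eup E k j) + vq^-1 *: (Eup E k j * Eup E i k),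
      Ebup E Eb i j = - (Eup E i k * Ebup E Eb k j) + vq^-1 *: (Ebup E Eb k j * Eup E i k),
      Edown F i j = - (Edown F k j * Edown F i k) + vq *: (Edown F i k * Edown F k j)
    & Ebdown F Fb i j = - (Ebdown F Fb k j * Edown F i k) + vq *: (Edown F i k * Ebdown F Fb k j)].
Proof.
have ltikj : (i < k < j)%N by rewrite hik.
have in_range m l :
  (i <= m)%N -> (m.+1 < l < j)%N -> (0 < m)%N && (m.+1 < l < n)%N by lia.
split;
  [apply: Eup_split | apply: Ebup_split | apply: Edown_split | apply: Ebdown_split];
  rewrite ?ltikj // => m l im mlj; have /andP[m_gt0 mln] := in_range m l im mlj;
  by case: (qq_rels_comm_far hrel m_gt0 mln).
Qed.
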